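(* For every command $c$ of the While-language and every store $\sigma$: $\big(\forall\sigma'.\ (c,\sigma,\Downarrow)\Rightarrow^{co}_G\sigma',\Uparrow\big)$ if and only if $\big(\exists\sigma'.\ (c,\sigma,\Downarrow)\Rightarrow^{co}_G\sigma',\Uparrow\big)$.
   Context: While-language syntax: variables $x$ range over a countably infinite set $\mathit{Var}$; $n$ ranges over natural numbers; values are $v ::= \mathsf{null}\mid n$ ($\mathsf{null}$ distinct from every natural number); expressions are $e ::= v\mid x\mid e_1\oplus e_2$ with $\oplus\in\{+,-,*\}$, where $\oplus(n_1,n_2)$ is the result of the operation on naturals; commands are $c ::= \mathsf{skip}\mid\mathsf{alloc}\ x\mid x:=e\mid c_1;c_2\mid \mathsf{if}\ e\ c_1\ c_2\mid\mathsf{while}\ e\ c$. A store $\sigma$ is a finite partial map from $\mathit{Var}$ to values, with domain $\mathrm{dom}(\sigma)$, lookup $\sigma(x)$, update $\sigma[x\mapsto v]$. Flag-based big-step semantics: status flags $\delta ::= \Downarrow\mid\Uparrow$ (convergent / divergent). Expression evaluation $(e,\sigma,\delta)\Rightarrow_{GE}v,\delta'$ is the least relation with: $(v,\sigma,\Downarrow)\Rightarrow_{GE}v,\Downarrow$; $(x,\sigma,\Downarrow)\Rightarrow_{GE}\sigma(x),\Downarrow$ if $x\in\mathrm{dom}(\sigma)$; if $(e_1,\sigma,\Downarrow)\Rightarrow_{GE}n_1,\delta$ and $(e_2,\sigma,\delta)\Rightarrow_{GE}n_2,\delta'$ ($n_1,n_2$ naturals) then $(e_1\oplus e_2,\sigma,\Downarrow)\Rightarrow_{GE}\oplus(n_1,n_2),\delta'$;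 and $(e,\sigma,\Uparrow)\Rightarrow_{GE}v,\Uparrow$ for every value $v$. The command rules for judgments $(c,\sigma,\delta)\Rightarrow_G\sigma',\delta'$ are: $(\mathsf{skip},\sigma,\Downarrow)\Rightarrow_G\sigma,\Downarrow$; $(\mathsf{alloc}\ x,\sigma,\Downarrow)\Rightarrow_G\sigma[x\mapsto\mathsf{null}],\Downarrow$ if $x\notin\mathrm{dom}(\sigma)$; $(x:=e,\sigma,\Downarrow)\Rightarrow_G\sigma[x\mapsto v],\delta$ if $x\in\mathrm{dom}(\sigma)$ and $(e,\sigma,\Downarrow)\Rightarrow_{GE}v,\delta$; $(c_1;c_2,\sigma,\Downarrow)\Rightarrow_G\sigma'',\delta'$ if $(c_1,\sigma,\Downarrow)\Rightarrow_G\sigma',\delta$ and $(c_2,\sigma',\delta)\Rightarrow_G\sigma'',\delta'$; $(\mathsf{if}\ e\ c_1\ c_2,\sigma,\Downarrow)\Rightarrow_G\sigma',\delta'$ if $v\ne0$, $(e,\sigma,\Downarrow)\Rightarrow_{GE}v,\delta$ and $(c_1,\sigma,\delta)\Rightarrow_G\sigma',\delta'$; $(\mathsf{if}\ e\ c_1\ c_2,\sigma,\Downarrow)\Rightarrow_G\sigma',\delta'$ if $(e,\sigma,\Downarrow)\Rightarrow_{GE}0,\delta$ and $(c_2,\sigma,\delta)\Rightarrow_G\sigma',\delta'$; $(\mathsf{while}\ e\ c,\sigma,\Downarrow)\Rightarrow_G\sigma'',\delta''$ if $(e,\sigma,\Downarrow)\Rightarrow_{GE}v,\delta$, $v\ne0$,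 $(c,\sigma,\delta)\Rightarrow_G\sigma',\delta'$ and $(\mathsf{while}\ e\ c,\sigma',\delta')\Rightarrow_G\sigma'',\delta''$; $(\mathsf{while}\ e\ c,\sigma,\Downarrow)\Rightarrow_G\sigma,\delta$ if $(e,\sigma,\Downarrow)\Rightarrow_{GE}0,\delta$; $(c,\sigma,\Uparrow)\Rightarrow_G\sigma',\Uparrow$ for every store $\sigma'$. $\Rightarrow^{co}_G$ denotes the coinductive interpretation of these command rules: the greatest relation such that every element is the conclusion of a rule instance whose command premises lie in it. *)

From Stdlib Require Import Arith Lia.

Definition var := nat.

Inductive value : Type := Vnull : value | Vnat : nat -> value.

Inductive binop : Type := Oplus | Ominus | Omult.

Inductive expr : Type :=
| Eval : value -> expr
| Evar : var -> expr
| Ebin : binop -> expr -> expr -> expr.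

Inductive cmd : Type :=
| Cskip : cmd
| Calloc : var -> cmd
| Cassign : var -> expr -> cmd
| Cseq : cmd -> cmd -> cmd
| Cif : expr -> cmd -> cmd -> cmd
| Cwhile : expr -> cmd -> cmd.

(* The result of the operation on naturals (subtraction truncated on nat). *)
Definition op_nat (o : binop) (n1 n2 : nat) : nat :=
  match o with Oplus => n1 + n2 | Ominus => n1 - n2 | Omult => n1 * n2 end.

Definition store : Type :=
  { s : var -> option value | exists N, forall x, N <= x -> s x = None }.

Definition lookup (s : store) (x : var) : option value := proj1_sig s x.

Lemma update_finite (s : store) (x : var) (v : value) :
  exists N, forall y, N <= y ->
    (fun y => if Nat.eqb y x then Some v else proj1_sig s y) y = None.
Proof.
  destruct s as [f [N HN]]; simpl.
  exists (S (max N x)); intros y Hy.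
  destruct (Nat.eqb_spec y x) as [->|_].
  - exfalso; lia.
  - apply HN; lia.
Qed.

Definition update (s : store) (x : var) (v : value) : store :=
  exist _ (fun y => if Nat.eqb y x then Some v else proj1_sig s y)
        (update_finite s x v).

(* status flags: Conv = convergent (⇓), Div = divergent (⇑) *)
Inductive flag : Type := Conv | Div.

Inductive evalGE : expr -> store -> flag -> value -> flag -> Prop :=
| GE_val : forall v s, evalGE (Eval v) s Conv v Conv
| GE_var : forall x s v, lookup s x = Some v -> evalGE (Evar x) s Conv v Conv
| GE_bin : forall o e1 e2 s n1 n2 d d',
    evalGE e1 s Conv (Vnat n1) d ->
    evalGE e2 s d (Vnat n2) d' ->
    evalGE (Ebin o e1 e2) s Conv (Vnat (op_nat o n1 n2)) d'
| GE_div : forall e s v, evalGE e s Div v Div.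

(* Coinductive interpretation ⇒^co_G of the command rules. *)
CoInductive coevalG : cmd -> store -> flag -> store -> flag -> Prop :=
| G_skip : forall s, coevalG Cskip s Conv s Conv
| G_alloc : forall x s, lookup s x = None ->
    coevalG (Calloc x) s Conv (update s x Vnull) Conv
| G_assign : forall x e s v d u, lookup s x = Some u ->
    evalGE e s Conv v d ->
    coevalG (Cassign x e) s Conv (update s x v) d
| G_seq : forall c1 c2 s s' s'' d d',
    coevalG c1 s Conv s' d -> coevalG c2 s' d s'' d' ->
    coevalG (Cseq c1 c2) s Conv s'' d'
| G_if_true : forall e c1 c2 s s' v d d', v <> Vnat 0 ->
    evalGE e s Conv v d -> coevalG c1 s d s' d' ->
    coevalG (Cif e c1 c2) s Conv s' d'
| G_if_false : forall e c1 c2 s s' d d',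
    evalGE e s Conv (Vnat 0) d -> coevalG c2 s d s' d' ->
    coevalG (Cif e c1 c2) s Conv s' d'
| G_while_true : forall e c s s' s'' v d d' d'', v <> Vnat 0 ->
    evalGE e s Conv v d -> coevalG c s d s' d' ->
    coevalG (Cwhile e c) s' d' s'' d'' ->
    coevalG (Cwhile e c) s Conv s'' d''
| G_while_false : forall e c s d,
    evalGE e s Conv (Vnat 0) d -> coevalG (Cwhile e c) s Conv s d
| G_div : forall c s s', coevalG c s Div s' Div.

(* Expression evaluation started in the convergent state never diverges, so a
   divergent result of a command can only come from the rule that propagates
   divergence, possibly after a convergent prefix. That rule accepts any final
   store; hence, corecursively, any divergent derivation can be rebuilt with an
   arbitrary final store, and one divergent final store yields all of them. *)

Lemma evalGE_conv_flag (e : expr) (s : store) (d : flag) (v : value) (d' : flag) :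
  evalGE e s d v d' -> d = Conv -> d' = Conv.
Proof.
  intros Heval; induction Heval; intros Hd; try congruence.
  apply IHHeval2, IHHeval1, Hd.
Qed.

CoFixpoint coevalG_div_any_store (s' : store) (c : cmd) (s : store) (d : flag)
  (s0 : store) (H : coevalG c s d s0 Div) : coevalG c s d s' Div.
Proof.
  inversion H as
    [ | | x e s1 v d1 u Hx He
    | c1 c2 s1 s1' s1'' d1 d1' H1 H2
    | e c1 c2 s1 s1' v d1 d1' Hv He H1
    | e c1 c2 s1 s1' d1 d1' He H2
    | e c1 s1 s1' s1'' v d1 d1' d1'' Hv He H1 H2
    | e c1 s1 d1 He
    | c1 s1 s1' ]; subst.
  - discriminate (evalGE_conv_flag _ _ _ _ _ He eq_refl).
  - exact (G_seq _ _ _ _ _ _ _ H1 (coevalG_div_any_store s' _ _ _ _ H2)).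
  - exact (G_if_true _ _ _ _ _ _ _ _ Hv He (coevalG_div_any_store s' _ _ _ _ H1)).
  - exact (G_if_false _ _ _ _ _ _ _ He (coevalG_div_any_store s' _ _ _ _ H2)).
  - exact (G_while_true _ _ _ _ _ _ _ _ _ Hv He H1
             (coevalG_div_any_store s' _ _ _ _ H2)).
  - discriminate (evalGE_conv_flag _ _ _ _ _ He eq_refl).
  - apply G_div.
Qed.

Theorem lemma21 : forall (c : cmd) (s : store),
  (forall s' : store, coevalG c s Conv s' Div) <->
  (exists s' : store, coevalG c s Conv s' Div).
Proof.
  intros c s; split.
  - intros Hall; exists s; apply Hall.
  - intros [s0 Hdiv] s'; exact (coevalG_div_any_store s' _ _ _ _ Hdiv).
Qed.
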